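(* Consider the following binary classification model of feature learning. Let $p_d\in[0,1]$, $p_r=1-p_d$, and let $t_d,t_r,n_d,n_r,c_d,c_r$ be nonnegative integers with $n_d\le t_d$, $n_r\le t_r$, $c_d\le t_d$, $c_r\le t_r$. Set $c = 2(c_d+c_r)$. Each class $y\in\{1,2\}$ has its own set $D_y$ of $t_d$ dominant features and its own set $R_y$ of $t_r$ rare features, all these sets being pairwise disjoint. **Data.** A data point $(x,y)$ is generated as follows: $y$ is uniform on $\{1,2\}$; with probability $p_d$ the feature set $\Pi(x)$ is a uniformly random $n_d$-subset of $D_y$, and otherwise it is a uniformly random $n_r$-subset of $R_y$. **Models.** A model $f$ is drawn independently of the data by choosing, for each class $y$, a uniformly random $c_d$-subset of $D_y$ and a uniformly random $c_r$-subset of $R_y$, all choices independent; $\Pi(f)$ is the union of these subsets. A model is correct on $(x,y)$ (predicts $y$) if $\Pi(f)\cap\Pi(x)\ne\varnothing$. **Agreement.** Let $\zeta:\mathbb{N}\times\mathbb{N}\to[0,1]$ be an agreement function. Draw two models $f,g$ i.i.d. from this distribution, independent of $(x,y)$, and let $k$ be the number of features of class $y$ that $f$ and $g$ share, i.e. $k = |\Pi(f)\cap\Pi(g)\cap(D_y\cup R_y)|$. The predictions of $f$ and $g$ on $(x,y)$ are as follows: - If both $f$ and $g$ share a feature with $x$, both predict $y$ and so agree. - If exactly one shares a feature with $x$, the other guesses uniformly at random, independently, so they agree with probability $\frac12$. - If neither shares a feature with $x$, they agree with probability $\zeta(k,c)$ when $k\ge1$, and with probability $\frac12$ (independent uniform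 guesses) when $k=0$. With the convention $\binom{n}{r}=0$ when $n<0$, $r<0$ or $n<r$, let $$q_1 = p_d\left(1-\frac{\binom{t_d-c_d}{n_d}}{\binom{t_d}{n_d}}\right)^2 + p_r\left(1-\frac{\binom{t_r-c_r}{n_r}}{\binom{t_r}{n_r}}\right)^2,$$ $$\begin{aligned}q_2(k) = {}& p_d\frac{\binom{t_d-n_d}{c_d}^2}{\binom{t_d}{c_d}^2}\left(\sum_{a+b=k}\frac{\binom{c_d}{a}\binom{t_d-n_d-c_d}{c_d-a}}{\binom{t_d-n_d}{c_d}}\frac{\binom{c_r}{b}\binom{t_r-c_r}{c_r-b}}{\binom{t_r}{c_r}}\right)\\ &+ p_r\frac{\binom{t_r-n_r}{c_r}^2}{\binom{t_r}{c_r}^2}\left(\sum_{a+b=k}\frac{\binom{c_d}{a}\binom{t_d-c_d}{c_d-a}}{\binom{t_d}{c_d}}\frac{\binom{c_r}{b}\binom{t_r-n_r-c_r}{c_r-b}}{\binom{t_r-n_r}{c_r}}\right),\end{aligned}$$ where the sums range over nonnegative integers $a,b$. Then the expected agreement (probability that $f$ and $g$ output the same label on $(x,y)$, over the data, the pair of models and the random guesses) is $$\mathsf{Agr} = \frac12 + \frac12 q_1 + \sum_{k=1}^{c}\left(\zeta(k,c)-\frac12\right)q_2(k).$$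
   Context: In the paper, $c$ is the total model capacity, with $c_d=\frac12 p_d c$ and $c_r=\frac12 p_r c$ rounded to integers so that the total number of features in a model is $c$. The paper describes $\zeta(k,c)$ informally as the probability that two models that both lack any feature of $x$ agree, given that they share $k$ features. Here $k$ is made precise as the number of shared features of $x$'s class, which is the quantity the formula for $q_2(k)$ counts. *)

From mathcomp Require Import all_boot all_order all_algebra.
Set Implicit Arguments. Unset Strict Implicit. Unset Printing Implicit Defensive.
Import Order.TTheory GRing.Theory Num.Theory.
Local Open Scope ring_scope.

(* Binomial coefficient on integers, with the convention binom n r = 0 when
   n < 0, r < 0 or n < r (the last case is already 'C(n,r) = 0). *)
Definition binz (R : nzRingType) (n r : int) : R :=
  match n, r with
  | Posz n', Posz r' => ('C(n', r'))%:R
  | _, _ => 0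
  end.

Section Model.
Variable R : realFieldType.
Variables td tr nd nr cd cr : nat.

(* Classes y are encoded by bool (true = class 1, false = class 2).
   The dominant features of class y are D_y ~ 'I_td (one copy per class),
   the rare features of class y are R_y ~ 'I_tr (one copy per class);
   copies for distinct classes / kinds are disjoint by construction. *)

Definition model := ({ffun bool -> {set 'I_td}} * {ffun bool -> {set 'I_tr}})%type.

Definition model_w (m : model) : R :=
  \prod_(y : bool)
     ((#|m.1 y| == cd)%:R / ('C(td, cd))%:R * ((#|m.2 y| == cr)%:R / ('C(tr, cr))%:R)).

(* The feature set Pi(x) of a data point of class y is given by its dominant
   part Sd (subset of D_y) and its rare part Sr (subset of R_y).
   f is correct on (x,y) iff Pi(f) meets Pi(x). *)
Definition hits (m : model) (y : bool) (Sd : {set 'I_td}) (Sr : {set 'I_tr}) : bool :=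
  (m.1 y :&: Sd != set0) || (m.2 y :&: Sr != set0).

Definition shared (f g : model) (y : bool) : nat :=
  #|f.1 y :&: g.1 y| + #|f.2 y :&: g.2 y|.

(* Conditional probability (over the random guesses) that f and g agree on (x,y). *)
Definition agree_prob (zeta : nat -> nat -> R) (c : nat) (f g : model) (y : bool)
    (Sd : {set 'I_td}) (Sr : {set 'I_tr}) : R :=
  if hits f y Sd Sr && hits g y Sd Sr then 1
  else if hits f y Sd Sr || hits g y Sd Sr then 2^-1
  else if (0 < shared f g y)%N then zeta (shared f g y) c
  else 2^-1.

Definition agr_given (zeta : nat -> nat -> R) (c : nat) (y : bool)
    (Sd : {set 'I_td}) (Sr : {set 'I_tr}) : R :=
  \sum_(f : model) \sum_(g : model) model_w f * model_w g * agree_prob zeta c f g y Sd Sr.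

Definition Agr (pd : R) (zeta : nat -> nat -> R) : R :=
  let c := (2 * (cd + cr))%N in
  \sum_(y : bool) 2^-1 *
    (pd * \sum_(Sd : {set 'I_td} | #|Sd| == nd)
             (('C(td, nd))%:R)^-1 * agr_given zeta c y Sd set0
     + (1 - pd) * \sum_(Sr : {set 'I_tr} | #|Sr| == nr)
             (('C(tr, nr))%:R)^-1 * agr_given zeta c y set0 Sr).

Definition q1 (pd : R) : R :=
  pd * (1 - binz R (td%:Z - cd%:Z) nd%:Z / binz R td%:Z nd%:Z) ^+ 2
  + (1 - pd) * (1 - binz R (tr%:Z - cr%:Z) nr%:Z / binz R tr%:Z nr%:Z) ^+ 2.

Definition q2 (pd : R) (k : nat) : R :=
  pd * (binz R (td%:Z - nd%:Z) cd%:Z ^+ 2 / binz R td%:Z cd%:Z ^+ 2) *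
    (\sum_(a < k.+1)
       (binz R cd%:Z a%:Z * binz R (td%:Z - nd%:Z - cd%:Z) (cd%:Z - a%:Z)
          / binz R (td%:Z - nd%:Z) cd%:Z) *
       (binz R cr%:Z (k - a)%:Z * binz R (tr%:Z - cr%:Z) (cr%:Z - (k - a)%:Z)
          / binz R tr%:Z cr%:Z))
  + (1 - pd) * (binz R (tr%:Z - nr%:Z) cr%:Z ^+ 2 / binz R tr%:Z cr%:Z ^+ 2) *
    (\sum_(a < k.+1)
       (binz R cd%:Z a%:Z * binz R (td%:Z - cd%:Z) (cd%:Z - a%:Z)
          / binz R td%:Z cd%:Z) *
       (binz R cr%:Z (k - a)%:Z * binz R (tr%:Z - nr%:Z - cr%:Z) (cr%:Z - (k - a)%:Z)
          / binz R (tr%:Z - nr%:Z) cr%:Z)).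

End Model.

(* For a fixed label y and data features, the agreement probability of two models is
     1/2 + 1/2 [f hits x] [g hits x]
         + sum_(1 <= k <= c) (zeta(k, c) - 1/2) [f, g both miss x and share k features],
   as long as the models share at most c features.  Only the class-y parts of f and g
   matter, and they are independent uniform draws of subsets.  Hence the first expectation
   is (1 - P)^2, where P is the probability that a uniform draw avoids Pi(x), and the second
   factors over dominant and rare features into a convolution of the hypergeometric
   probabilities C(t-n, c) C(c, a) C(t-n-c, c-a) / C(t, c)^2 that two draws both avoid
   Pi(x) and meet in a features.  Averaging over the data gives q1 and q2; the paper writes
   P as C(t-c, n) / C(t, n), which equals C(t-n, c) / C(t, c). *)

From mathcomp Require Import all_boot all_order all_algebra ring zify.
Set Implicit Arguments. Unset Strict Implicit. Unset Printing Implicit Defensive.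
Import Order.TTheory GRing.Theory Num.Theory.
Local Open Scope ring_scope.

Lemma binR_neq0 (R : numFieldType) (t c : nat) : (c <= t)%N -> 'C(t, c)%:R != 0 :> R.
Proof. by move=> ct; rewrite pnatr_eq0 -lt0n bin_gt0. Qed.

Lemma half_add_half (R : numFieldType) : 2^-1 + 2^-1 = 1 :> R.
Proof. by rewrite [RHS]splitr mul1r. Qed.

Lemma sum_eq_addn (R : pzSemiRingType) (x y k : nat) :
  \sum_(i < k.+1) ((x == i) && (y == (k - i)%N))%:R = (x + y == k)%:R :> R.
Proof.
have [xk|kx] := leqP x k.
  rewrite (bigD1 (Ordinal (xk : (x < k.+1)%N))) //= eqxx big1 ?addr0 => [|i /negbTE xi].
    by congr (_%:R); apply/eqP/eqP; lia.
  by rewrite -val_eqE /= in xi; rewrite eq_sym xi.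
rewrite big1 => [|i _]; last by rewrite eq_sym (ltn_eqF (leq_trans (ltn_ord i) kx)).
by rewrite (gtn_eqF (leq_trans kx (leq_addr _ _))).
Qed.

Lemma sum_nat_mul_eq (R : pzSemiRingType) (m n s : nat) (F : nat -> R) :
  \sum_(m <= k < n) F k * (s == k)%:R = ((m <= s < n)%N)%:R * F s.
Proof.
have [s_in|s_out] := boolP (m <= s < n)%N.
  rewrite (bigD1_seq s) ?mem_index_iota ?iota_uniq //= eqxx mulr1 mul1r.
  by rewrite big1 ?addr0 // => k /negbTE ks; rewrite eq_sym ks mulr0.
rewrite mul0r big_nat big1 // => k k_in.
by rewrite (_ : s == k = false) ?mulr0 //; apply: contraNF s_out => /eqP ->.
Qed.

Lemma bin_sub_swap (t n c : nat) : (n <= t)%N -> (c <= t)%N ->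
  ('C(t - n, c) * 'C(t, n) = 'C(t - c, n) * 'C(t, c))%N.
Proof.
move=> nt ct; have [nc_le|nc_gt] := leqP (n + c) t; last first.
  by rewrite (@bin_small (t - n) c) ?(@bin_small (t - c) n) ?mul0n //; lia.
have fact_gt0 : (0 < n`! * c`! * (t - n - c)`!)%N by rewrite !muln_gt0 !fact_gt0.
have [c_le_tn n_le_tc] : (c <= t - n)%N /\ (n <= t - c)%N by lia.
apply/eqP; rewrite -(eqn_pmul2r fact_gt0); apply/eqP; transitivity t`!.
  by rewrite -(bin_fact nt) -(bin_fact c_le_tn); ring.
by rewrite -(bin_fact ct) -(bin_fact n_le_tc) (subnAC t c n); ring.
Qed.

Lemma card_draws_meet (T : finType) (B F : {set T}) (m a : nat) :
  F \subset B -> (a <= m)%N ->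
  #|[set G : {set T} | (G \subset B) && (#|G| == m) && (#|G :&: F| == a)]| =
    ('C(#|F|, a) * 'C(#|B| - #|F|, m - a))%N.
Proof.
move=> FB am.
pose split G := (G :&: F, G :\: F).
have split_inj : injective split.
  by move=> G1 G2 [eqI eqD]; rewrite -(setID G1 F) -(setID G2 F) eqI eqD.
rewrite -(card_imset _ split_inj) -(cardsDS FB) -!cards_draws -cardsX.
apply: eq_card => -[X Y]; rewrite !inE /=.
apply/imsetP/and3P => [[G] | [/andP[XF /eqP cardX] YBF /eqP cardY]].
  rewrite inE => /andP[/andP[GB /eqP cardG] /eqP cardGF] [-> ->].
  by rewrite subsetIr cardGF setSD //= cardsD cardG cardGF !eqxx.
have /subsetDP[YB YF] := YBF.
have splitXY : split (X :|: Y) = (X, Y).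
  rewrite /split setIUl setDUl (setIidPl XF) (setDidPl YF).
  move: YF; rewrite -setI_eq0 => /eqP ->; move: XF; rewrite -setD_eq0 => /eqP ->.
  by rewrite setU0 set0U.
exists (X :|: Y) => //; rewrite inE -(cardsID F) subUset (subset_trans XF FB) YB.
by case: splitXY => -> ->; rewrite cardX cardY subnKC // !eqxx.
Qed.

Lemma sum_subsets_card_const (R : numFieldType) (T : finType) (t n : nat)
    (G : {set T} -> R) (v : R) :
  #|T| = t -> (n <= t)%N -> (forall S : {set T}, #|S| = n -> G S = v) ->
  \sum_(S : {set T} | #|S| == n) ('C(t, n)%:R)^-1 * G S = v.
Proof.
move=> <- nT Gv; rewrite (eq_bigr (fun _ => ('C(#|T|, n)%:R)^-1 * v)) => [|S /eqP/Gv -> //].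
rewrite sumr_const (eq_card (B := [set S : {set T} | #|S| == n])) => [|S]; last by rewrite inE.
by rewrite card_draws -(mulr_natl (_ * v)) mulrA mulfV ?mul1r ?binR_neq0.
Qed.

Section FiniteExpectation.
Variable R : comPzRingType.
Implicit Types (S T : finType).

Definition expect T (p : T -> R) (F : T -> R) : R := \sum_t p t * F t.

Definition prodw S T (p : S -> R) (q : T -> R) (x : S * T) : R := p x.1 * q x.2.

Definition ffunw (I T : finType) (p : T -> R) (phi : {ffun I -> T}) : R :=
  \prod_i p (phi i).

Lemma eq_expect_on T (p : T -> R) (F G : T -> R) :
  (forall t, p t != 0 -> F t = G t) -> expect p F = expect p G.
Proof.
move=> eqFG; apply: eq_bigr => t _.
by have [->|/eqFG->] := eqVneq (p t) 0; rewrite ?mul0r.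
Qed.

Lemma expect_cst T (p : T -> R) (a : R) :
  \sum_t p t = 1 -> expect p (fun _ => a) = a.
Proof. by rewrite /expect -mulr_suml => ->; rewrite mul1r. Qed.

Lemma expectD T (p : T -> R) (F G : T -> R) :
  expect p (fun t => F t + G t) = expect p F + expect p G.
Proof. by rewrite /expect -big_split; apply: eq_bigr => t _; rewrite mulrDr. Qed.

Lemma expectB T (p : T -> R) (F G : T -> R) :
  expect p (fun t => F t - G t) = expect p F - expect p G.
Proof. by rewrite /expect -sumrB; apply: eq_bigr => t _; rewrite mulrBr. Qed.

Lemma expectZ T (p : T -> R) (a : R) (F : T -> R) :
  expect p (fun t => a * F t) = a * expect p F.
Proof. by rewrite /expect mulr_sumr; apply: eq_bigr => t _; rewrite mulrCA. Qed.

Lemma expect_sum T (p : T -> R) (I : Type) (r : seq I) (F : I -> T -> R) :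
  expect p (fun t => \sum_(i <- r) F i t) = \sum_(i <- r) expect p (F i).
Proof. by rewrite /expect; under eq_bigr do rewrite mulr_sumr; exact: exchange_big. Qed.

Lemma expect_prodwE S T (p : S -> R) (q : T -> R) (F : S * T -> R) :
  expect (prodw p q) F = \sum_s \sum_t p s * q t * F (s, t).
Proof.
rewrite /expect (eq_bigr (fun x => p x.1 * q x.2 * F (x.1, x.2))) => [|[] //].
by rewrite pair_bigA.
Qed.

Lemma expect_prodw S T (p : S -> R) (q : T -> R) (F : S * T -> R) :
  expect (prodw p q) F = expect p (fun s => expect q (fun t => F (s, t))).
Proof.
rewrite expect_prodwE; apply: eq_bigr => s _.
by rewrite mulr_sumr; apply: eq_bigr => t _; rewrite mulrA.
Qed.

Lemma sum_prodw S T (p : S -> R) (q : T -> R) :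
  \sum_x prodw p q x = (\sum_s p s) * (\sum_t q t).
Proof. by rewrite big_distrlr pair_bigA. Qed.

Lemma prodw_neq0 S T (p : S -> R) (q : T -> R) x :
  prodw p q x != 0 -> (p x.1 != 0) && (q x.2 != 0).
Proof.
by apply: contraR; rewrite negb_and !negbK /prodw => /orP[] /eqP->; rewrite ?mul0r ?mulr0.
Qed.

Lemma expect_prodw_mul S T (p : S -> R) (q : T -> R) (F : S -> R) (G : T -> R) :
  expect (prodw p q) (fun x => F x.1 * G x.2) = expect p F * expect q G.
Proof.
rewrite expect_prodw /expect mulr_suml; apply: eq_bigr => s _.
by rewrite !mulr_sumr; apply: eq_bigr => t _; rewrite mulrA mulrACA.
Qed.

Lemma expect_prodw_map S T S' T' (p : S -> R) (q : T -> R) (p' : S' -> R) (q' : T' -> R)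
    (f : S -> S') (g : T -> T') :
  (forall F, expect p (F \o f) = expect p' F) ->
  (forall G, expect q (G \o g) = expect q' G) ->
  forall H, expect (prodw p q) (fun x => H (f x.1, g x.2)) = expect (prodw p' q') H.
Proof.
move=> pf qg H; rewrite !expect_prodw.
transitivity (expect p (fun s => expect q' (fun t' => H (f s, t')))).
  by apply: eq_bigr => s _; rewrite -(qg (fun t' => H (f s, t'))).
exact: (pf (fun s' => expect q' (fun t' => H (s', t')))).
Qed.

Lemma expect_prodw_regroup S1 S2 T1 T2 (p1 : S1 -> R) (p2 : S2 -> R)
    (q1 : T1 -> R) (q2 : T2 -> R) (F : (S1 * S2) * (T1 * T2) -> R) :
  expect (prodw (prodw p1 p2) (prodw q1 q2)) F =
  expect (prodw (prodw p1 q1) (prodw p2 q2))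
    (fun x => F ((x.1.1, x.2.1), (x.1.2, x.2.2))).
Proof.
pose swap (x : (S1 * T1) * (S2 * T2)) := ((x.1.1, x.2.1), (x.1.2, x.2.2)).
pose unswap (x : (S1 * S2) * (T1 * T2)) := ((x.1.1, x.2.1), (x.1.2, x.2.2)).
rewrite /expect (reindex swap); last by exists unswap => [[[? ?] [? ?]]|[[? ?] [? ?]]].
by apply: eq_bigr => -[[a1 b1] [a2 b2]] _; rewrite /prodw /= mulrACA.
Qed.

Lemma expect_ffunw_eval (I T : finType) (p : T -> R) (i : I) (F : T -> R) :
  \sum_t p t = 1 -> expect (ffunw p) (fun phi => F (phi i)) = expect p F.
Proof.
move=> p1; pose G j t := if j == i then p t * F t else p t.
transitivity (\prod_j \sum_t G j t); last first.
  rewrite /expect (bigD1 i) //= [X in _ * X]big1 ?mulr1 => [|j /negbTE ji]; last first.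
    by under eq_bigr do rewrite /G ji.
  by apply: eq_bigr => t _; rewrite /G eqxx.
rewrite bigA_distr_bigA; apply: eq_bigr => phi _.
rewrite /ffunw (bigD1 i) //= [in RHS](bigD1 i) //= /G eqxx mulrAC.
by congr (_ * _); apply: eq_bigr => j /negbTE ->.
Qed.

Lemma sum_ffunw (I T : finType) (p : T -> R) :
  \sum_t p t = 1 -> \sum_(phi : {ffun I -> T}) ffunw p phi = 1.
Proof.
move=> p1; rewrite /ffunw -(bigA_distr_bigA (fun (_ : I) t => p t)).
by rewrite big1 // => i _; rewrite p1.
Qed.

Lemma ffunw_neq0 (I T : finType) (p : T -> R) (phi : {ffun I -> T}) i :
  ffunw p phi != 0 -> p (phi i) != 0.
Proof. by apply: contraNneq; rewrite /ffunw (bigD1 i) //= => ->; rewrite mul0r. Qed.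

End FiniteExpectation.

Section UniformSubsets.
Variable R : numFieldType.

Definition avoid_prob (t c n : nat) : R := 'C(t - n, c)%:R / 'C(t, c)%:R.

Definition avoid_meet_prob (t c n j : nat) : R :=
  ('C(t - n, c) * 'C(c, j) * 'C(t - n - c, c - j))%:R / 'C(t, c)%:R ^+ 2.

Variable T : finType.

Definition unif_subset (c : nat) (A : {set T}) : R := (#|A| == c)%:R / 'C(#|T|, c)%:R.

Definition avoid_meet (S : {set T}) (j : nat) (x : {set T} * {set T}) : bool :=
  [disjoint x.1 & S] && [disjoint x.2 & S] && (#|x.1 :&: x.2| == j).

Lemma unif_subset_support c A : unif_subset c A != 0 -> #|A| = c.
Proof. by rewrite mulf_eq0 negb_or pnatr_eq0 eqb0 negbK => /andP[/eqP]. Qed.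

Lemma expect_unif_subset_indicator c (P : pred {set T}) :
  expect (unif_subset c) (fun A => (P A)%:R) =
    #|[set A : {set T} | (#|A| == c) && P A]|%:R / 'C(#|T|, c)%:R.
Proof.
rewrite /expect /unif_subset; under eq_bigr do rewrite mulrAC -natrM mulnb.
rewrite -mulr_suml -sum1_card natr_sum; congr (_ / _); rewrite [RHS]big_mkcond.
by apply: eq_bigr => A _; rewrite inE; case: (_ && _).
Qed.

Lemma sum_unif_subset c : (c <= #|T|)%N -> \sum_A unif_subset c A = 1.
Proof.
move=> cT; have := expect_unif_subset_indicator c predT.
rewrite /expect; under eq_bigr do rewrite mulr1.
move=> ->; rewrite (eq_card (B := [set A : {set T} | #|A| == c])) => [|A]; last first.
  by rewrite !inE andbT.
by rewrite card_draws divff ?binR_neq0.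
Qed.

Lemma expect_unif_avoid c (S : {set T}) :
  expect (unif_subset c) (fun A => [disjoint A & S]%:R) = avoid_prob #|T| c #|S|.
Proof.
rewrite expect_unif_subset_indicator /avoid_prob -(cardsC S) addKn -cards_draws.
by congr (_%:R / _); apply: eq_card => A; rewrite !inE disjoints_subset andbC.
Qed.

Lemma expect_unif_avoid_meet c (S A : {set T}) (j : nat) :
  #|A| = c -> A \subset ~: S ->
  expect (unif_subset c) (fun B => ([disjoint B & S] && (#|B :&: A| == j))%:R) =
    ('C(c, j) * 'C(#|T| - #|S| - c, c - j))%:R / 'C(#|T|, c)%:R.
Proof.
move=> cardA AS; rewrite expect_unif_subset_indicator; congr (_%:R / _).
have [cj|jc] := ltnP c j.
  rewrite bin_small // mul0n; apply: eq_card0 => B; rewrite !inE.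
  apply/negP => /and3P[_ _ /eqP cardBA].
  by move: (subset_leq_card (subsetIr B A)); rewrite cardBA cardA leqNgt cj.
rewrite -cardA -(cardsC S) addKn -card_draws_meet ?cardA //.
by apply: eq_card => B; rewrite !inE disjoints_subset; case: (_ == _); case: (_ \subset _).
Qed.

Lemma expect_unif_pair_avoid_meet c (S : {set T}) (j : nat) :
  expect (prodw (unif_subset c) (unif_subset c)) (fun x => (avoid_meet S j x)%:R) =
  avoid_meet_prob #|T| c #|S| j.
Proof.
pose K : R := ('C(c, j) * 'C(#|T| - #|S| - c, c - j))%:R / 'C(#|T|, c)%:R.
rewrite expect_prodw.
transitivity (expect (unif_subset c) (fun A => K * [disjoint A & S]%:R)).
  apply: eq_expect_on => A /unif_subset_support cardA; rewrite /avoid_meet /=.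
  have [AS|/negbTE nAS] := boolP [disjoint A & S]; last first.
    by rewrite mulr0 /expect big1 // => B _; rewrite mulr0.
  rewrite mulr1n mulr1 /K -(expect_unif_avoid_meet _ cardA) -?disjoints_subset //.
  by apply: eq_expect_on => B _ /=; rewrite setIC.
rewrite expectZ expect_unif_avoid /K /avoid_prob /avoid_meet_prob !natrM.
by rewrite mulrACA -invfM -expr2; congr (_ * _); rewrite mulrC mulrA.
Qed.

End UniformSubsets.

Section TwoKinds.
Variables (R : numFieldType) (T1 T2 : finType) (c1 c2 : nat).
Variables (S1 : {set T1}) (S2 : {set T2}).

Definition misses (a : {set T1} * {set T2}) : bool :=
  [disjoint a.1 & S1] && [disjoint a.2 & S2].

Local Notation draw := (prodw (unif_subset R c1) (unif_subset R c2)).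

Lemma expect_misses :
  expect draw (fun a => (misses a)%:R) =
    avoid_prob R #|T1| c1 #|S1| * avoid_prob R #|T2| c2 #|S2|.
Proof.
rewrite -!expect_unif_avoid -expect_prodw_mul.
by apply: eq_expect_on => a _; rewrite -natrM mulnb.
Qed.

Lemma expect_both_miss_overlap (k : nat) :
  expect (prodw draw draw)
    (fun x => (misses x.1 && misses x.2 &&
               (#|x.1.1 :&: x.2.1| + #|x.1.2 :&: x.2.2| == k))%:R) =
  \sum_(i < k.+1)
    avoid_meet_prob R #|T1| c1 #|S1| i * avoid_meet_prob R #|T2| c2 #|S2| (k - i)%N.
Proof.
pose meet1 i (x : {set T1} * {set T1}) : R := (avoid_meet S1 i x)%:R.
pose meet2 i (x : {set T2} * {set T2}) : R := (avoid_meet S2 (k - i) x)%:R.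
rewrite expect_prodw_regroup.
transitivity (expect (prodw (prodw (unif_subset R c1) (unif_subset R c1))
                            (prodw (unif_subset R c2) (unif_subset R c2)))
   (fun x => \sum_(i < k.+1) meet1 i x.1 * meet2 i x.2)).
  apply: eq_expect_on => -[[A1 B1] [A2 B2]] _ /=.
  rewrite /misses /meet1 /meet2 /avoid_meet /=; under eq_bigr do rewrite -natrM mulnb.
  case: [disjoint A1 & S1]; case: [disjoint B1 & S1];
    case: [disjoint A2 & S2]; case: [disjoint B2 & S2];
    rewrite /= ?sum_eq_addn ?big1_eq // big1 // => i _; by rewrite andbF.
rewrite expect_sum; apply: eq_bigr => i _.
by rewrite (expect_prodw_mul _ _ (meet1 i) (meet2 i)) !expect_unif_pair_avoid_meet.
Qed.

End TwoKinds.

Section Model.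
Variables (R : realFieldType) (td tr cd cr : nat).
Hypotheses (cd_le_td : (cd <= td)%N) (cr_le_tr : (cr <= tr)%N).

Local Notation mw := (@model_w R td tr cd cr).
Local Notation class_draw :=
  (prodw (unif_subset R (T := 'I_td) cd) (unif_subset R (T := 'I_tr) cr)).

Definition class_part (y : bool) (m : model td tr) : {set 'I_td} * {set 'I_tr} :=
  (m.1 y, m.2 y).

Lemma model_wE m :
  mw m = prodw (ffunw (unif_subset R cd)) (ffunw (unif_subset R cr)) m.
Proof. by rewrite /model_w /prodw /ffunw big_split /unif_subset !card_ord. Qed.

Lemma sum_model_w : \sum_m mw m = 1.
Proof.
rewrite (eq_bigr _ (fun m _ => model_wE m)) sum_prodw !sum_ffunw ?mulr1 //.
all: by apply: sum_unif_subset; rewrite card_ord.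
Qed.

Lemma model_w_support m y : mw m != 0 -> #|m.1 y| = cd /\ #|m.2 y| = cr.
Proof.
rewrite model_wE => /prodw_neq0/andP[/(ffunw_neq0 y) f1 /(ffunw_neq0 y) f2].
by split; [exact: unif_subset_support f1 | exact: unif_subset_support f2].
Qed.

Lemma expect_class_part y H : expect mw (H \o class_part y) = expect class_draw H.
Proof.
transitivity (expect (prodw (ffunw (unif_subset R cd)) (ffunw (unif_subset R cr)))
                     (H \o class_part y)).
  by apply: eq_bigr => m _; rewrite model_wE.
have eval_y (T : finType) c : (c <= #|T|)%N -> forall F,
    expect (ffunw (unif_subset R c)) (F \o fun phi : {ffun bool -> {set T}} => phi y) =
    expect (unif_subset R c) F.
  by move=> cT F; apply: expect_ffunw_eval; apply: sum_unif_subset.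
have cd_le : (cd <= #|'I_td|)%N by rewrite card_ord.
have cr_le : (cr <= #|'I_tr|)%N by rewrite card_ord.
exact: (expect_prodw_map (eval_y _ _ cd_le) (eval_y _ _ cr_le) H).
Qed.

Lemma negb_hits m y Sd Sr : ~~ hits m y Sd Sr = misses Sd Sr (class_part y m).
Proof. by rewrite /hits negb_or !negbK !setI_eq0. Qed.

Lemma expect_hits y Sd Sr :
  expect mw (fun m => (hits m y Sd Sr)%:R) =
    1 - avoid_prob R td cd #|Sd| * avoid_prob R tr cr #|Sr|.
Proof.
transitivity (expect mw (fun m => 1 - (misses Sd Sr (class_part y m))%:R)).
  by apply: eq_expect_on => m _; rewrite -negb_hits; case: hits; rewrite ?subr0 ?subrr.
rewrite expectB expect_cst ?sum_model_w //.
by rewrite (expect_class_part y (fun a => (misses Sd Sr a)%:R)) expect_misses !card_ord.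
Qed.

Lemma expect_miss_shared y Sd Sr k :
  expect (prodw mw mw) (fun x =>
    (~~ hits x.1 y Sd Sr && ~~ hits x.2 y Sd Sr && (shared x.1 x.2 y == k))%:R) =
  \sum_(i < k.+1) avoid_meet_prob R td cd #|Sd| i * avoid_meet_prob R tr cr #|Sr| (k - i)%N.
Proof.
have := expect_both_miss_overlap R cd cr Sd Sr k; rewrite !card_ord => <-.
rewrite -(expect_prodw_map (expect_class_part y) (expect_class_part y)).
by apply: eq_expect_on => x _; rewrite !negb_hits.
Qed.

Lemma agree_probE (zeta : nat -> nat -> R) c (f g : model td tr) y Sd Sr :
  (shared f g y <= c)%N ->
  agree_prob zeta c f g y Sd Sr =
    2^-1 + 2^-1 * ((hits f y Sd Sr)%:R * (hits g y Sd Sr)%:R)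
    + \sum_(1 <= k < c.+1) (zeta k c - 2^-1) *
        (~~ hits f y Sd Sr && ~~ hits g y Sd Sr && (shared f g y == k))%:R.
Proof.
move=> shared_le; rewrite /agree_prob.
case: (hits f y Sd Sr); case: (hits g y Sd Sr); rewrite [LHS]/=.
1-3: by rewrite big1 => [|k _] /=; rewrite ?(mulr0, mulr1, mul0r, addr0, half_add_half).
under eq_bigr => k _ do rewrite [_ && _]/=.
rewrite sum_nat_mul_eq !mulr0 addr0 ltnS shared_le andbT.
by case: posnP => _ /=; rewrite ?mul0r ?addr0 // mul1r addrC subrK.
Qed.

Lemma agr_givenE (zeta : nat -> nat -> R) c y (Sd : {set 'I_td}) (Sr : {set 'I_tr}) :
  (cd + cr <= c)%N ->
  agr_given cd cr zeta c y Sd Sr =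
    2^-1 + 2^-1 * (1 - avoid_prob R td cd #|Sd| * avoid_prob R tr cr #|Sr|) ^+ 2
    + \sum_(1 <= k < c.+1) (zeta k c - 2^-1) *
        \sum_(i < k.+1)
          avoid_meet_prob R td cd #|Sd| i * avoid_meet_prob R tr cr #|Sr| (k - i)%N.
Proof.
move=> cdr_le_c.
have -> : agr_given cd cr zeta c y Sd Sr =
    expect (prodw mw mw) (fun x => agree_prob zeta c x.1 x.2 y Sd Sr).
  by rewrite expect_prodwE.
transitivity (expect (prodw mw mw) (fun x =>
    2^-1 + 2^-1 * ((hits x.1 y Sd Sr)%:R * (hits x.2 y Sd Sr)%:R)
    + \sum_(1 <= k < c.+1) (zeta k c - 2^-1) *
        (~~ hits x.1 y Sd Sr && ~~ hits x.2 y Sd Sr && (shared x.1 x.2 y == k))%:R)).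
  apply: eq_expect_on => -[f g] /prodw_neq0/andP[/= mf mg].
  have [f1 f2] := model_w_support y mf; have [g1 g2] := model_w_support y mg.
  apply/agree_probE/(leq_trans _ cdr_le_c); rewrite /shared -f1 -f2.
  by apply: leq_add; apply: subset_leq_card; apply: subsetIl.
rewrite !expectD expect_cst ?sum_prodw ?sum_model_w ?mulr1 //.
pose hit m : R := (hits m y Sd Sr)%:R.
rewrite expectZ (expect_prodw_mul _ _ hit hit) expect_hits -expr2 expect_sum.
by congr (_ + _); apply: eq_bigr => k _; rewrite expectZ expect_miss_shared.
Qed.

End Model.

Section BinzConversion.
Variable R : numFieldType.

Lemma binzE (m r : nat) : binz R m%:Z r%:Z = 'C(m, r)%:R.
Proof. by []. Qed.

Lemma avoid_prob0 (t c : nat) : (c <= t)%N -> avoid_prob R t c 0 = 1.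
Proof. by move=> ct; rewrite /avoid_prob subn0 divff ?binR_neq0. Qed.

Lemma avoid_prob_swap (t c n : nat) : (n <= t)%N -> (c <= t)%N ->
  binz R (t%:Z - c%:Z) n%:Z / binz R t%:Z n%:Z = avoid_prob R t c n.
Proof.
move=> nt ct; rewrite (subzn ct) !binzE; apply/eqP.
by rewrite eqr_div ?binR_neq0 // -!natrM bin_sub_swap.
Qed.

Lemma binz_avoid_meet (t c n a : nat) : (n <= t)%N -> (c <= t)%N ->
  binz R (t%:Z - n%:Z) c%:Z ^+ 2 / binz R t%:Z c%:Z ^+ 2 *
    (binz R c%:Z a%:Z * binz R (t%:Z - n%:Z - c%:Z) (c%:Z - a%:Z)
       / binz R (t%:Z - n%:Z) c%:Z) =
  avoid_meet_prob R t c n a.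
Proof.
move=> nt ct; rewrite /avoid_meet_prob (subzn nt) !binzE.
have [c_le|c_gt] := leqP c (t - n); last first.
  by rewrite bin_small // !mul0n expr0n !mul0r.
rewrite (subzn c_le).
have [a_le|a_gt] := leqP a c; last by rewrite (bin_small a_gt) !(muln0, mul0n, mul0r, mulr0).
by rewrite (subzn a_le) binzE !natrM; field; rewrite !binR_neq0.
Qed.

Lemma binz_meet (t c b : nat) : (c <= t)%N ->
  binz R c%:Z b%:Z * binz R (t%:Z - c%:Z) (c%:Z - b%:Z) / binz R t%:Z c%:Z =
  avoid_meet_prob R t c 0 b.
Proof.
move=> ct; rewrite /avoid_meet_prob !subn0 (subzn ct) !binzE.
have [b_le|b_gt] := leqP b c; last by rewrite (bin_small b_gt) !(muln0, mul0n, mul0r, mulr0).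
by rewrite (subzn b_le) binzE !natrM; field; rewrite !binR_neq0.
Qed.

End BinzConversion.

Section PaperQuantities.
Variables (R : realFieldType) (pd : R) (td tr nd nr cd cr : nat).
Hypotheses (nd_le_td : (nd <= td)%N) (nr_le_tr : (nr <= tr)%N).
Hypotheses (cd_le_td : (cd <= td)%N) (cr_le_tr : (cr <= tr)%N).

Lemma q1E : q1 td tr nd nr cd cr pd =
  pd * (1 - avoid_prob R td cd nd * avoid_prob R tr cr 0) ^+ 2
  + (1 - pd) * (1 - avoid_prob R td cd 0 * avoid_prob R tr cr nr) ^+ 2.
Proof. by rewrite /q1 !avoid_prob0 // mulr1 mul1r !avoid_prob_swap. Qed.

Lemma q2E k : q2 td tr nd nr cd cr pd k =
  pd * \sum_(i < k.+1) avoid_meet_prob R td cd nd i * avoid_meet_prob R tr cr 0 (k - i)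
  + (1 - pd) * \sum_(i < k.+1) avoid_meet_prob R td cd 0 i * avoid_meet_prob R tr cr nr (k - i).
Proof.
rewrite /q2 -[pd * _ * _]mulrA -[(1 - pd) * _ * _]mulrA.
congr (_ * _ + _ * _); rewrite mulr_sumr; apply: eq_bigr => i _.
  by rewrite -binz_avoid_meet // -binz_meet //; exact: mulrA.
by rewrite -binz_meet // -binz_avoid_meet //; exact: mulrCA.
Qed.

End PaperQuantities.

Theorem mainTheorem2 (R : realFieldType) (pd : R) (td tr nd nr cd cr : nat)
    (zeta : nat -> nat -> R) :
  0 <= pd <= 1 ->
  (nd <= td)%N -> (nr <= tr)%N -> (cd <= td)%N -> (cr <= tr)%N ->
  (forall k c', 0 <= zeta k c' <= 1) ->
  Agr td tr nd nr cd cr pd zeta =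
    2^-1 + 2^-1 * q1 td tr nd nr cd cr pd
    + \sum_(1 <= k < (2 * (cd + cr)).+1)
        (zeta k (2 * (cd + cr))%N - 2^-1) * q2 td tr nd nr cd cr pd k.
Proof.
move=> _ nd_le nr_le cd_le cr_le _.
set c := (2 * (cd + cr))%N; have c_ge : (cd + cr <= c)%N by rewrite /c; lia.
pose V P (Q : nat -> R) :=
  2^-1 + 2^-1 * (1 - P) ^+ 2 + \sum_(1 <= k < c.+1) (zeta k c - 2^-1) * Q k.
have data_dom y : \sum_(Sd : {set 'I_td} | #|Sd| == nd)
    ('C(td, nd)%:R)^-1 * agr_given cd cr zeta c y Sd (set0 : {set 'I_tr}) =
  V (avoid_prob R td cd nd * avoid_prob R tr cr 0)
    (fun k => \sum_(i < k.+1) avoid_meet_prob R td cd nd i * avoid_meet_prob R tr cr 0 (k - i)).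
  apply: (sum_subsets_card_const (card_ord td) nd_le) => Sd cardSd.
  by rewrite agr_givenE // cardSd cards0.
have data_rare y : \sum_(Sr : {set 'I_tr} | #|Sr| == nr)
    ('C(tr, nr)%:R)^-1 * agr_given cd cr zeta c y (set0 : {set 'I_td}) Sr =
  V (avoid_prob R td cd 0 * avoid_prob R tr cr nr)
    (fun k => \sum_(i < k.+1) avoid_meet_prob R td cd 0 i * avoid_meet_prob R tr cr nr (k - i)).
  apply: (sum_subsets_card_const (card_ord tr) nr_le) => Sr cardSr.
  by rewrite agr_givenE // cardSr cards0.
rewrite /Agr -/c; under eq_bigr do rewrite data_dom data_rare.
rewrite sumr_const card_bool -mulrnAl mulr2n half_add_half mul1r q1E //.
under [in RHS]eq_bigr do rewrite q2E // mulrDr [_ * (pd * _)]mulrCA [_ * ((1 - pd) * _)]mulrCA.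
by rewrite big_split /= -!mulr_sumr /V; ring.
Qed.
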